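(* For every algebra $A$, the anti-rotor $\mathfrak{u}_A$ has dimension at least $1$.
   Context: An ''algebra'' is a real finite-dimensional unital associative algebra with underlying vector space $\mathbb{R}^n$ ($n\ge1$), standard basis, elements column vectors $s=(x_1,\dots,x_n)^T$, $\mathbf{d}s=(dx_1,\dots,dx_n)^T$. An uncurling metric of $A$ is a real symmetric $n\times n$ matrix $L$ with $d\big((s^{-1})^TL\,\mathbf{d}s\big)=0$ on an open ball centered at $\mathbf{1}_A$ consisting only of units; the anti-rotor $\mathfrak{u}_A$ is the real vector space of all uncurling metrics of $A$. *)

From HB Require Import structures.
From mathcomp Require Import all_boot all_order all_algebra.
From mathcomp Require Import all_classical all_reals all_analysis.
Set Implicit Arguments. Unset Strict Implicit. Unset Printing Implicit Defensive.
Import Order.TTheory GRing.Theory Num.Theory.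
Import numFieldNormedType.Exports.
Local Open Scope ring_scope.

Section Defs.
Variables (R : realType) (n : nat).
Notation V := 'cV[R]_n.

Definition is_algebra (mul : V -> V -> V) (one : V) : Prop :=
  [/\ (forall (a : R) (x y z : V), mul (a *: x + y) z = a *: mul x z + mul y z),
      (forall (a : R) (x y z : V), mul z (a *: x + y) = a *: mul z x + mul z y),
      (forall x y z : V, mul x (mul y z) = mul (mul x y) z),
      (forall x : V, mul one x = x) &
      (forall x : V, mul x one = x)].

Definition eball (c : V) (r : R) : set V :=
  [set s | \sum_(i < n) (s i 0 - c i 0) ^+ 2 < r ^+ 2].

(* The j-th coefficient of the 1-form (s^{-1})^T L ds, given an inverse map. *)
Definition form_coef (inv : V -> V) (L : 'M[R]_n) (j : 'I_n) (s : V) : R :=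
  ((inv s)^T *m L) 0 j.

Definition std_basis (k : 'I_n) : V := delta_mx k 0.

(* L is an uncurling metric: L is symmetric, and on some open ball centred at
   1_A consisting only of units (with inverse map inv), the 1-form
   (s^{-1})^T L ds = sum_j omega_j dx_j is closed, i.e. d omega = 0:
   d_k omega_j = d_j omega_k for all j, k. *)
Definition uncurling_metric (mul : V -> V -> V) (one : V) (L : 'M[R]_n) : Prop :=
  L^T = L /\
  exists r : R, 0 < r /\ exists inv : V -> V,
    (forall s, eball one r s -> mul s (inv s) = one /\ mul (inv s) s = one) /\
    (forall s, eball one r s -> forall j k : 'I_n,
       derivable (form_coef inv L j) s (std_basis k) /\
       'D_(std_basis k) (form_coef inv L j) s =
       'D_(std_basis j) (form_coef inv L k) s).

End Defs.

From HB Require Import structures.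
From mathcomp Require Import all_boot all_order all_algebra.
From mathcomp Require Import all_classical all_reals all_analysis.
Import Order.TTheory GRing.Theory Num.Theory.
Import numFieldNormedType.Exports.
Set Implicit Arguments. Unset Strict Implicit.
Unset Printing Implicit Defensive.
Local Open Scope ring_scope.
Local Open Scope classical_set_scope.

(* Let l_x be the matrix of left multiplication by x.  The trace form
   L(x, y) = tr l_(xy) is symmetric and nonzero, since L(1, 1) = n.  Near 1
   every s is a unit, and the coefficients of (s^-1)^T L ds are
   w_j(s) = tr (l_s^-1 l_(e_j)); differentiating the matrix inverse gives
   d_k w_j(s) = - tr (l_s^-1 l_(e_k) l_s^-1 l_(e_j)), which is symmetric in
   j and k by cyclicity of the trace. *)

Lemma linear_coord_expand (R : pzRingType) (W : lmodType R) n
    (f : 'cV[R]_n -> W) :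
  (forall a x y, f (a *: x + y) = a *: f x + f y) ->
  forall y, f y = \sum_(b < n) y b 0 *: f (delta_mx b 0).
Proof.
move=> lin y.
have f0 : f 0 = 0.
  apply: (@addrI _ (f 0)).
  by rewrite addr0 -{1}(scale1r (f 0)) -lin scaler0 addr0.
have fD : {morph f : u v / u + v}.
  by move=> u v; rewrite -[u]scale1r lin !scale1r.
have fZ a u : f (a *: u) = a *: f u by rewrite -[a *: u]addr0 lin f0 addr0.
rewrite {1}[y]matrix_sum_delta (big_morph f fD f0); apply: eq_bigr => b _.
by rewrite big_ord1 fZ.
Qed.

Section EntrywiseConvergence.
Context {R : numFieldType} {T : Type} (F : set_system T) {FF : Filter F}.

Lemma cvg_sum (I : Type) (r : seq I) (P : pred I) (f : I -> T -> R)
    (l : I -> R) :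
  (forall i, P i -> f i t @[t --> F] --> l i) ->
  \sum_(i <- r | P i) f i t @[t --> F] --> \sum_(i <- r | P i) l i.
Proof. by apply: cvg_big => //; exact: add_continuous. Qed.

Lemma cvg_prod (I : Type) (r : seq I) (P : pred I) (f : I -> T -> R)
    (l : I -> R) :
  (forall i, P i -> f i t @[t --> F] --> l i) ->
  \prod_(i <- r | P i) f i t @[t --> F] --> \prod_(i <- r | P i) l i.
Proof. by apply: cvg_big => //; exact: mul_continuous. Qed.

Lemma cvg_det m (A : T -> 'M[R]_m) (M : 'M[R]_m) :
  (forall i j, A t i j @[t --> F] --> M i j) ->
  \det (A t) @[t --> F] --> \det M.
Proof.
move=> cvgA; apply: cvg_sum => s _; apply: cvgM; first exact: cvg_cst.
by apply: cvg_prod => i _; exact: cvgA.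
Qed.

Lemma cvg_adj m (A : T -> 'M[R]_m) (M : 'M[R]_m) :
  (forall i j, A t i j @[t --> F] --> M i j) ->
  forall i j, \adj (A t) i j @[t --> F] --> \adj M i j.
Proof.
move=> cvgA i j; rewrite mxE; under eq_fun do rewrite mxE.
apply: cvgM; first exact: cvg_cst.
apply: cvg_det => k l; rewrite !mxE; under eq_fun do rewrite !mxE.
exact: cvgA.
Qed.

Lemma near_unitmx m (A : T -> 'M[R]_m) (M : 'M[R]_m) :
  (forall i j, A t i j @[t --> F] --> M i j) -> M \in unitmx ->
  \forall t \near F, A t \in unitmx.
Proof.
move=> cvgA; rewrite unitmxE unitfE => detM.
have := cvgr_neq0 (FF := FF) _ (cvg_det cvgA) detM.
by apply: filterS => t; rewrite unitmxE unitfE.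
Qed.

Lemma cvg_invmx m (A : T -> 'M[R]_m) (M : 'M[R]_m) :
  (forall i j, A t i j @[t --> F] --> M i j) -> M \in unitmx ->
  forall i j, invmx (A t) i j @[t --> F] --> invmx M i j.
Proof.
move=> cvgA UM i j.
have invE B : B \in unitmx -> invmx B i j = (\det B)^-1 * \adj B i j.
  by move=> UB; rewrite /invmx UB mxE.
have eq_near : {near F, (fun t => (\det (A t))^-1 * \adj (A t) i j) =1
                       (fun t => invmx (A t) i j)}.
  by apply: filterS (near_unitmx cvgA UM) => t /invE ->.
apply: cvg_trans (near_eq_cvg eq_near) _; rewrite invE //.
apply: cvgM; last exact: cvg_adj.
by apply: cvgV (cvg_det cvgA); rewrite -unitfE -unitmxE.
Qed.

Lemma cvg_tr_mulmx m (X : T -> 'M[R]_m) (X0 K : 'M[R]_m) :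
  (forall i j, X t i j @[t --> F] --> X0 i j) ->
  \tr (X t *m K) @[t --> F] --> \tr (X0 *m K).
Proof.
move=> cvgX; apply: cvg_sum => i _; rewrite mxE; under eq_fun do rewrite mxE.
by apply: cvg_sum => k _; apply: cvgM; [exact: cvgX | exact: cvg_cst].
Qed.

End EntrywiseConvergence.

Section TraceInverseDerivative.
Context {R : numFieldType} {m : nat}.
Implicit Types M N B C : 'M[R]_m.

Lemma invmxB M N : M \in unitmx -> N \in unitmx ->
  invmx N - invmx M = invmx N *m (M - N) *m invmx M.
Proof.
move=> UM UN.
by rewrite mulmxBr mulmxBl mulVmx // mul1mx -mulmxA mulmxV // mulmx1.
Qed.

Lemma is_derive_tr_invmx {V : normedModType R} (A : V -> 'M[R]_m) (s v : V)
    B C :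
  A s \in unitmx -> (forall h : R, A (h *: v + s) = A s + h *: C) ->
  is_derive s v (fun x => \tr (invmx (A x) *m B))
    (- \tr (invmx (A s) *m C *m invmx (A s) *m B)).
Proof.
move=> UA lineA; set M := A s.
have cvgA i j : A (h *: v + s) i j @[h --> (0 : R)] --> M i j.
  have -> : M i j = M i j + 0 * C i j by rewrite mul0r addr0.
  have -> : (fun h => A (h *: v + s) i j) = (fun h => M i j + h * C i j).
    by apply/funext => h; rewrite lineA !mxE.
  apply: (cvgD (F := nbhs (0 : R))); first exact: cvg_cst.
  by apply: cvgM; [exact: cvg_id | exact: cvg_cst].
pose q h := - \tr (invmx (A (h *: v + s)) *m (C *m (invmx M *m B))).
have cvg_q :
    q h @[h --> (0 : R)^'] --> - \tr (invmx M *m (C *m (invmx M *m B))).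
  apply: (cvg_within_filter (F := nbhs (0 : R))).
  apply: (cvgN (F := nbhs (0 : R))).
  by apply: (cvg_tr_mulmx (F := nbhs (0 : R))); exact: cvg_invmx.
pose quot h :=
  h^-1 *: (\tr (invmx (A (h *: v + s)) *m B) - \tr (invmx M *m B)).
have eq_q : {near (0 : R)^', q =1 quot}.
  near=> h.
  have h0 : h != 0 by near: h; exact: nbhs_dnbhs_neq.
  have UN : A (h *: v + s) \in unitmx.
    by near: h; apply: nbhs_dnbhs; exact: near_unitmx cvgA UA.
  rewrite /q /quot -linearB -mulmxBl invmxB // lineA opprD addNKr -scaleNr.
  rewrite -scalemxAr -!scalemxAl linearZ !mulmxA.
  by rewrite /GRing.scale /= mulNr mulrN mulKf.
have cvg_quot :
    quot h @[h --> (0 : R)^'] --> - \tr (invmx M *m (C *m (invmx M *m B))).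
  exact: cvg_trans (near_eq_cvg eq_q) cvg_q.
rewrite -!mulmxA.
by split; [exact: cvgP cvg_quot | exact: cvg_lim cvg_quot].
Unshelve. all: by end_near.
Qed.

End TraceInverseDerivative.

Lemma eball_sub_ball (R : realType) n (c : 'cV[R]_n) r :
  0 < r -> eball c r `<=` ball c r.
Proof.
move=> r_gt0 s sum_lt; split => // i j; rewrite (ord1 j) /ball /=.
have : (s i 0 - c i 0) ^+ 2 < r ^+ 2.
  apply: le_lt_trans sum_lt; rewrite (bigD1 i) //= lerDl.
  by apply: sumr_ge0 => k _; exact: sqr_ge0.
by rewrite distrC -ltr_sqr ?nnegrE ?(ltW r_gt0) // real_normK ?num_real.
Qed.

Section TraceForm.
Variables (R : realType) (n : nat) (mul : 'cV[R]_n -> 'cV[R]_n -> 'cV[R]_n).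
Variable one : 'cV[R]_n.
Hypothesis alg : is_algebra mul one.
Local Notation e := (std_basis R).

Definition lmul_mx x : 'M[R]_n := \matrix_(i, j) mul x (e j) i 0.

Lemma mul_lmul_mx x y : mul x y = lmul_mx x *m y.
Proof.
have [_ linr _ _ _] := alg.
rewrite (linear_coord_expand (fun a u w => linr a u w x) y).
apply/matrixP => i j; rewrite (ord1 j) summxE mxE.
by apply: eq_bigr => b _; rewrite !mxE mulrC.
Qed.

Lemma lmul_mx_linear a x y :
  lmul_mx (a *: x + y) = a *: lmul_mx x + lmul_mx y.
Proof.
by have [linl _ _ _ _] := alg; apply/matrixP => i j; rewrite !mxE linl !mxE.
Qed.

Lemma lmul_mxM x y : lmul_mx (mul x y) = lmul_mx x *m lmul_mx y.
Proof.
have [_ _ mulA _ _] := alg.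
apply/matrixP => i j; rewrite !mxE -mulA (mul_lmul_mx x) mxE.
by apply: eq_bigr => k _; rewrite [lmul_mx y k j]mxE.
Qed.

Lemma lmul_mx1 : lmul_mx one = 1%:M.
Proof.
have [_ _ _ mul1x _] := alg.
by apply/matrixP => i j; rewrite !mxE mul1x !mxE andbT.
Qed.

Lemma lmul_mxK x : lmul_mx x *m one = x.
Proof. by have [_ _ _ _ mulx1] := alg; rewrite -mul_lmul_mx mulx1. Qed.

(* At a non-unit x, invmx returns its argument, so alg_inv x = x and
   lmul_mx_alg_inv below holds for every x. *)
Definition alg_inv x := invmx (lmul_mx x) *m one.

Lemma lmul_mx_alg_inv x : lmul_mx (alg_inv x) = invmx (lmul_mx x).
Proof.
have [U | nU] := boolP (lmul_mx x \in unitmx); last first.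
  by rewrite /alg_inv (invmx_out nU) lmul_mxK.
apply: (can_inj (mulKmx U)); rewrite -lmul_mxM mul_lmul_mx /alg_inv.
by rewrite mulmxA !mulmxV // mul1mx lmul_mx1.
Qed.

Lemma mul_alg_inv x : lmul_mx x \in unitmx ->
  mul x (alg_inv x) = one /\ mul (alg_inv x) x = one.
Proof.
move=> U; split; first by rewrite mul_lmul_mx /alg_inv mulmxA mulmxV // mul1mx.
by rewrite mul_lmul_mx lmul_mx_alg_inv -[X in _ *m X]lmul_mxK mulKmx.
Qed.

Definition trace_form_mx : 'M[R]_n :=
  \matrix_(i, j) \tr (lmul_mx (mul (e i) (e j))).

Lemma trace_form_mx_sym : trace_form_mx^T = trace_form_mx.
Proof. by apply/matrixP => i j; rewrite !mxE !lmul_mxM mxtrace_mulC. Qed.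

Lemma tr_lmul_mx_linear a x y :
  \tr (lmul_mx (a *: x + y)) = a * \tr (lmul_mx x) + \tr (lmul_mx y).
Proof. by rewrite lmul_mx_linear linearP. Qed.

Lemma trace_form_mx_apply x j :
  (x^T *m trace_form_mx) 0 j = \tr (lmul_mx (mul x (e j))).
Proof.
have [linl _ _ _ _] := alg.
have lin a u w : (\tr (lmul_mx (mul (a *: u + w) (e j))) : R^o) =
    a *: \tr (lmul_mx (mul u (e j))) + \tr (lmul_mx (mul w (e j))).
  by rewrite linl tr_lmul_mx_linear.
rewrite (linear_coord_expand lin x) mxE.
by apply: eq_bigr => b _; rewrite !mxE.
Qed.

Lemma trace_form_mx_neq0 : (0 < n)%N -> trace_form_mx != 0.
Proof.
have [_ _ _ mul1x _] := alg.
move=> n_gt0; apply/eqP => L0.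
have tr_e b : \tr (lmul_mx (e b)) = 0.
  by rewrite -(mul1x (e b)) -trace_form_mx_apply L0 mulmx0 mxE.
have : \tr (lmul_mx one) = 0.
  have lin a u w : (\tr (lmul_mx (a *: u + w)) : R^o) =
      a *: \tr (lmul_mx u) + \tr (lmul_mx w) := tr_lmul_mx_linear a u w.
  by rewrite (linear_coord_expand lin one) big1 // => b _; rewrite tr_e scaler0.
by rewrite lmul_mx1 mxtrace1 => /eqP; rewrite pnatr_eq0 eqn0Ngt n_gt0.
Qed.

Lemma form_coef_trace_form_mx j :
  form_coef alg_inv trace_form_mx j =
  fun s => \tr (invmx (lmul_mx s) *m lmul_mx (e j)).
Proof.
apply/funext => s.
by rewrite /form_coef trace_form_mx_apply lmul_mxM lmul_mx_alg_inv.
Qed.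

Lemma is_derive_form_coef s j k : lmul_mx s \in unitmx ->
  is_derive s (e k) (form_coef alg_inv trace_form_mx j)
    (- \tr (invmx (lmul_mx s) *m lmul_mx (e k) *m
            invmx (lmul_mx s) *m lmul_mx (e j))).
Proof.
move=> U; rewrite form_coef_trace_form_mx.
by apply: is_derive_tr_invmx U _ => h; rewrite lmul_mx_linear addrC.
Qed.

Lemma continuous_lmul_mx_entry i j : continuous (fun x => lmul_mx x i j).
Proof.
have -> : (fun x => lmul_mx x i j) = fun x => \sum_b x b 0 * lmul_mx (e b) i j.
  apply/funext => x; rewrite {1}(linear_coord_expand lmul_mx_linear x).
  by rewrite summxE; apply: eq_bigr => b _; rewrite mxE.
move=> x; apply: (cvg_sum (F := nbhs x)) => b _.
by apply: cvgM; [exact: coord_continuous | exact: cvg_cst].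
Qed.

Lemma near_one_unitmx : \forall x \near one, lmul_mx x \in unitmx.
Proof.
apply: (near_unitmx (M := lmul_mx one) (F := nbhs one)).
  by move=> i j; exact: continuous_lmul_mx_entry.
by rewrite lmul_mx1 unitmx1.
Qed.

End TraceForm.

Theorem corollary8p4 (R : realType) (n : nat)
    (mul : 'cV[R]_n -> 'cV[R]_n -> 'cV[R]_n) (one : 'cV[R]_n) :
  (0 < n)%N -> is_algebra mul one ->
  exists L : 'M[R]_n, L != 0 /\ uncurling_metric mul one L.
Proof.
move=> n_gt0 alg; exists (trace_form_mx mul); split.
  exact: trace_form_mx_neq0 alg n_gt0.
split; first exact: trace_form_mx_sym alg.
have [r r_gt0 ball_unit] := iffLR (nbhs_ballP one _) (near_one_unitmx alg).
exists r; split => //; exists (alg_inv mul one); split.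
  by move=> s /(eball_sub_ball r_gt0)/ball_unit; exact: mul_alg_inv.
move=> s /(eball_sub_ball r_gt0)/ball_unit U j k.
have [derivable_jk ->] := is_derive_form_coef alg j k U.
have [_ ->] := is_derive_form_coef alg k j U.
by split => //; rewrite -[in LHS]mulmxA mxtrace_mulC !mulmxA.
Qed.
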